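(* In a network satisfying (H1) and (H2), if $X$ is a non-intermediate species, then for no $\ell\ge1$ does $x^{(\ell)}$ contain a monomial of the form $z^m$ with $m\ge2$ and $Z$ a non-intermediate species.
   Context: Species are capital letters, concentrations lower-case letters. Mass-action system: $\dot{\mathbf{x}}=\sum_{y\to y'}k_{yy'}\mathbf{x}^y(y'-y)$, rates $k_{yy'}>0$ (vector $\mathbf{k}$). Total derivative: $\dot\varphi=\sum_i\frac{\partial\varphi}{\partial x_i}\dot x_i$ with $\dot x_i$ replaced by the right-hand side; $\varphi^{(\ell)}$ its $\ell$-th iterate; a monomial appears in $\varphi^{(\ell)}$ if its coefficient (a polynomial in $\mathbf{k}$) is nonzero. (H1) Every connected component has the form $Y+S_0\rightleftarrows U_1\to Y+S_1\rightleftarrows\cdots\rightleftarrows U_L\to Y+S_L$ (reactions $Y+S_{j-1}\to U_j$, $U_j\to Y+S_{j-1}$, $U_j\to Y+S_j$), unique enzyme $Y$; intermediates distinct throughout the network; non-intermediates of a component pairwise distinct but may appear in other components; each complex in a unique component. $\mathscr{S}_U$ = substrates/products of the component of intermediate $U$. (H2) A partition $\mathscr{S}^{(0)}\sqcup\cdots\sqcup\mathscr{S}^{(M)}$ ($M\ge2$, nonempty, $\mathscr{S}^{(0)}$ the intermediates) with: for each intermediate $U$ with enzyme $Y$, some $\alpha\ge1$ has $\mathscr{S}_U\subseteq\mathscr{S}^{(\alpha)}$, $Y\notin\mathscr{S}^{(\alpha)}$. *)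

From HB Require Import structures.
From mathcomp Require Import all_boot all_order all_algebra.
Set Implicit Arguments. Unset Strict Implicit. Unset Printing Implicit Defensive.
Import GRing.Theory Num.Theory.

(* ---------- Formal polynomials in x (species) with coefficients in Z[k] ----------
   A polynomial is a formal sum (list) of terms  c * k^a * x^b  with
   c : int, a : exponent vector over the reactions, b : exponent vector over
   the species.  The coefficient of the x-monomial x^b is the polynomial in k
   whose k^a-coefficient is [coef p a b]; it is nonzero iff some [coef p a b]
   is nonzero.  This is independent of the list representation. *)

Section Poly.
Variables (S Rx : finType).

Definition xmon := {ffun S -> nat}.
Definition kmon := {ffun Rx -> nat}.
Definition term := (int * kmon * xmon)%type.
Definition fpoly := seq term.

Definition coef (p : fpoly) (a : kmon) (b : xmon) : int :=
  (\sum_(t <- p | (t.1.2 == a) && (t.2 == b)) t.1.1)%R.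

Definition appears (p : fpoly) (b : xmon) : Prop := exists a : kmon, coef p a b != 0%R.

Definition pderiv (i : S) (p : fpoly) : fpoly :=
  [seq ((t.1.1 * (t.2 i)%:Z)%R, t.1.2, [ffun s => t.2 s - nat_of_bool (s == i)]) | t : term <- p].

Definition pmul (p q : fpoly) : fpoly :=
  [seq ((t.1.1 * u.1.1)%R, [ffun r => t.1.2 r + u.1.2 r], [ffun s => t.2 s + u.2 s])
  | t : term <- p, u : term <- q].

(* mass-action right-hand side for species i:
   sum over reactions r : src r -> tgt r of k_r x^(src r) (tgt r i - src r i) *)
Definition rhs (src tgt : Rx -> xmon) (i : S) : fpoly :=
  [seq (((tgt r i)%:Z - (src r i)%:Z)%R, [ffun r' => nat_of_bool (r' == r)], src r)
  | r <- enum Rx].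

Definition tder (src tgt : Rx -> xmon) (p : fpoly) : fpoly :=
  flatten [seq pmul (pderiv i p) (rhs src tgt i) | i <- enum S].

Definition xvar (X : S) : fpoly := [:: (1%R, [ffun => 0], [ffun s => nat_of_bool (s == X)])].

Definition zpow (Z : S) (m : nat) : xmon := [ffun s => if s == Z then m else 0].

End Poly.

Section Network.
Variables (S Rx C : finType).
Definition cplx1 (s : S) : xmon S := [ffun t => nat_of_bool (t == s)].
Definition cplx2 (a b : S) : xmon S := [ffun t => nat_of_bool (t == a) + nat_of_bool (t == b)].

(* Component data: component c has enzyme Y c, length L c, intermediates
   U c j (1 <= j <= L c) and substrates/products Sb c j (0 <= j <= L c):
   Y+S_0 <=> U_1 -> Y+S_1 <=> ... <=> U_L -> Y+S_L. *)
Variables (Y : C -> S) (L : C -> nat) (U : C -> nat -> S) (Sb : C -> nat -> S).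

Definition compReaction (c : C) (y y' : xmon S) : Prop :=
  exists j, 0 < j <= L c /\
    [\/ (y, y') = (cplx2 (Y c) (Sb c j.-1), cplx1 (U c j)),
        (y, y') = (cplx1 (U c j), cplx2 (Y c) (Sb c j.-1)) |
        (y, y') = (cplx1 (U c j), cplx2 (Y c) (Sb c j))].

Definition intermediate (s : S) : Prop := exists c j, 0 < j <= L c /\ s = U c j.

Definition H1 (src tgt : Rx -> xmon S) : Prop :=
  (forall c, 0 < L c) /\
  (forall r, exists c, compReaction c (src r) (tgt r)) /\
  (forall c y y', compReaction c y y' -> exists r, src r = y /\ tgt r = y') /\
  (forall c c' j j', 0 < j <= L c -> 0 < j' <= L c' -> U c j = U c' j' -> c = c' /\ j = j') /\
  (forall c c' j, 0 < j <= L c ->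
     U c j <> Y c' /\ (forall j', j' <= L c' -> U c j <> Sb c' j')) /\
  (forall c j j', j <= L c -> j' <= L c ->
     Sb c j <> Y c /\ (Sb c j = Sb c j' -> j = j')) /\
  (forall c c' j j', j <= L c -> j' <= L c' ->
     cplx2 (Y c) (Sb c j) = cplx2 (Y c') (Sb c' j') -> c = c').

(* S_U for U = U c j is { Sb c i | i <= L c }. Partition given by part : S -> 'I_M.+1. *)
Definition H2 (M : nat) (part : S -> 'I_M.+1) : Prop :=
  [/\ 2 <= M,
      forall alpha : 'I_M.+1, exists s, part s = alpha,
      forall s, part s = ord0 <-> intermediate s &
      forall c j, 0 < j <= L c ->
        exists alpha : 'I_M.+1, 0 < (alpha : nat) /\
          (forall i, i <= L c -> part (Sb c i) = alpha) /\ part (Y c) <> alpha].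
End Network.

From HB Require Import structures.
From mathcomp Require Import all_boot all_order all_algebra.

Set Implicit Arguments.
Unset Strict Implicit.
Unset Printing Implicit Defensive.

(* Every monomial of a total derivative is a multiple of the source monomial
   x^y of some reaction y -> y'.  Under (H1) a source complex is either a single
   intermediate or Y + S with Y <> S, so no pure power of a non-intermediate
   species is such a multiple, whatever the polynomial being differentiated. *)

Section TotalDerivative.
Variables (S Rx : finType) (src tgt : Rx -> xmon S).

Lemma mem_tder_src_le (p : fpoly S Rx) (t : term S Rx) :
  t \in tder src tgt p -> exists r, forall s, src r s <= t.2 s.
Proof.
rewrite /tder => /flattenP [q /mapP [i _ ->]].
rewrite /pmul => /flattenP [q' /mapP [t1 _ ->]] /mapP [u1 Hu ->].
move: Hu; rewrite /rhs => /mapP [r _ ->].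
by exists r => s /=; rewrite ffunE leq_addl.
Qed.

Lemma appears_tder_src_le (p : fpoly S Rx) (b : xmon S) :
  appears (tder src tgt p) b -> exists r, forall s, src r s <= b s.
Proof.
case=> a; have [/hasP [t t_in /eqP <-] _ | /hasPn no_b] :=
  boolP (has (fun t : term S Rx => t.2 == b) (tder src tgt p)).
  exact: mem_tder_src_le t_in.
rewrite /coef big1_seq ?eqxx // => t /andP [/andP [_ t_b] t_in].
by move: (no_b t t_in); rewrite t_b.
Qed.

End TotalDerivative.

Lemma support_le_zpow (S : finType) (y : xmon S) (Z : S) (m : nat) :
  (forall s, y s <= zpow Z m s) -> forall s, 0 < y s -> s = Z.
Proof.
move=> le_y s /leq_trans /(_ (le_y s)); rewrite /zpow ffunE.
by case: eqP.
Qed.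

Section Network.
Variables (S Rx C : finType) (src tgt : Rx -> xmon S).
Variables (Y : C -> S) (L : C -> nat) (U : C -> nat -> S) (Sb : C -> nat -> S).
Hypothesis HH1 : H1 Y L U Sb src tgt.

Lemma src_not_supported_on_nonintermediate (Z : S) (r : Rx) :
  ~ intermediate L U Z -> ~ (forall s, 0 < src r s -> s = Z).
Proof.
case: HH1 => _ [comp_r [_ [_ [_ [distinct_nonint _]]]]] nonint_Z supp_Z.
have [c [j [j_in src_r]]] := comp_r r.
have mem1 (a : S) : 0 < cplx1 a a by rewrite ffunE eqxx.
have mem2l (a b : S) : 0 < cplx2 a b a by rewrite ffunE eqxx.
have mem2r (a b : S) : 0 < cplx2 a b b by rewrite ffunE eqxx addn1.
case: src_r => [] [src_r _]; rewrite src_r in supp_Z.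
- have jp_le : j.-1 <= L c by case/andP: j_in => _; apply: leq_trans (leq_pred _).
  have [SbY _] := distinct_nonint c _ _ jp_le jp_le.
  by apply: SbY; rewrite (supp_Z _ (mem2l _ _)) (supp_Z _ (mem2r _ _)).
- by apply: nonint_Z; exists c, j; rewrite (supp_Z _ (mem1 _)).
- by apply: nonint_Z; exists c, j; rewrite (supp_Z _ (mem1 _)).
Qed.

Lemma not_appears_tder_zpow (p : fpoly S Rx) (Z : S) (m : nat) :
  ~ intermediate L U Z -> ~ appears (tder src tgt p) (zpow Z m).
Proof.
move=> nonint_Z /appears_tder_src_le [r le_src].
exact: src_not_supported_on_nonintermediate nonint_Z (support_le_zpow le_src).
Qed.

End Network.

Theorem mainTheorem9
  (S Rx : finType) (src tgt : Rx -> xmon S)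
  (* reactions are distinct pairs of distinct complexes *)
  (Hinj : injective (fun r => (src r, tgt r)))
  (Hne : forall r, src r <> tgt r)
  (* every species occurs in the network *)
  (Hocc : forall s, exists r, 0 < src r s \/ 0 < tgt r s)
  (C : finType) (Y : C -> S) (L : C -> nat) (U : C -> nat -> S) (Sb : C -> nat -> S)
  (HH1 : H1 Y L U Sb src tgt)
  (M : nat) (part : S -> 'I_M.+1)
  (HH2 : H2 Y L U Sb part)
  (X : S) (HX : ~ intermediate L U X) :
  forall (l : nat), 1 <= l ->
  forall (Z : S), ~ intermediate L U Z ->
  forall (m : nat), 2 <= m ->
    ~ appears (iter l (tder src tgt) (xvar Rx X)) (zpow Z m).
Proof.
move=> [|l] // _ Z nonint_Z m _.
exact: (not_appears_tder_zpow HH1 (p := iter l (tder src tgt) (xvar Rx X)) nonint_Z).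
Qed.
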